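(* Let $q$ be a power of the prime $p$, let $\mathcal{G}$ be a subgroup of the additive group $(\mathbb{F}_q,+)$ of order $p$, and let $f$ be a $\mathcal{G}$-fixed monic irreducible polynomial in $\mathbb{F}_q[T]$ of degree $ps$ (with $s\in\mathbb{Z}_{\geqslant 1}$). Then, in $\mathbb{F}_{q^s}[T]$, $f$ factors as a product of irreducible polynomials over $\mathbb{F}_{q^s}$ each of which is $\mathcal{G}$-fixed and of the form $T^p-\beta T-\gamma$ with $\beta\in\mathbb{F}_q^{\times}$ and $\gamma\in\mathbb{F}_{q^s}$.
   Context: A polynomial $f$ (over $\mathbb{F}_q$ or an extension of $\mathbb{F}_q$) is $\mathcal{G}$-fixed if $f(T+a)=f(T)$ for all $a\in\mathcal{G}$. Irreducible polynomials over $\mathbb{F}_{q^s}$ of the form $T^p-\beta T-\gamma$ with $\beta\in\mathbb{F}_q^\times$, $\gamma\in\mathbb{F}_{q^s}$ are called almost Artin–Schreier primes. *)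

From HB Require Import structures.
From mathcomp Require Import all_boot all_order all_algebra all_field.
Set Implicit Arguments. Unset Strict Implicit. Unset Printing Implicit Defensive.
Import GRing.Theory.
Local Open Scope ring_scope.

Definition Gfixed (R : comNzRingType) (G : pred R) (f : {poly R}) : Prop :=
  forall a, G a -> f \Po ('X + a%:P) = f.

Definition add_subgroup (F : zmodType) (G : {pred F}) : Prop :=
  0 \in G /\ (forall a b, a \in G -> b \in G -> a - b \in G).

From HB Require Import structures.
From mathcomp Require Import all_boot all_order all_algebra all_field.
From mathcomp Require Import ring.
Set Implicit Arguments. Unset Strict Implicit. Unset Printing Implicit Defensive.
Import GRing.Theory.
Local Open Scope ring_scope.

(* Pick a != 0 in G and set be = a^(p-1), L(T) = T^p - be T.  Since G = F_p a,
   every b in G satisfies b^p = be b, so L(T + b) = L(T) for b in G.  Euclidean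
   division by L then shows that a G-fixed polynomial is a polynomial in L, so
   f = g(L) with g monic irreducible of degree s over F_q.  Such a g splits over
   F_{q^s}, hence f = prod (L - gamma).  Each L - gamma is irreducible: an
   irreducible factor w of degree d over F_{q^s} divides T^(q^(sd)) - T, so the
   irreducible f divides this polynomial of F_q[T] as well, which forces
   ps <= sd, i.e. d >= p. *)

Lemma expf_cardX (K : finFieldType) (c : K) n : c ^+ (#|K| ^ n)%N = c.
Proof. by elim: n => [|n IH]; rewrite ?expr1 // expnS exprM expf_card IH. Qed.

Lemma pnat_pchar_cardX (K : finFieldType) n : [pchar K].-nat (#|K| ^ n)%N.
Proof.
have [p p_pr pcharKp] := finPcharP K.
rewrite (eq_pnat _ (pcharf_eq pcharKp)) pnatX; apply/orP; left.
by rewrite (card_pprimeChar pcharKp) pnatX pnat_id.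
Qed.

Lemma horner_exp_pchar (R : comNzRingType) N (P : {poly R}) z :
  [pchar R].-nat N -> (forall i, P`_i ^+ N = P`_i) -> P.[z] ^+ N = P.[z ^+ N].
Proof.
move=> pcharN coefP; rewrite !horner_coef.
elim/big_rec2: _ => [|i y1 y2 _ <-]; first by rewrite expr0n; case: N pcharN {coefP}.
by rewrite exprDn_pchar // exprMn coefP -!exprM mulnC.
Qed.

Section MonicIrreducibleOverFiniteField.

Variables (K : finFieldType) (u : {poly K}).
Hypothesis uI : monic_irreducible_poly u.

Lemma in_qpoly_eq0 P : (in_qpoly u P == 0) = (u %| P).
Proof.
have uM : u \is monic by case: uI.
apply/eqP/idP => [/val_eqP /= | uP].
  by rewrite -Pdiv.IdomainMonic.modpE // (mk_monicE uI).
by apply/val_eqP; rewrite /= -Pdiv.IdomainMonic.modpE (mk_monicE uI) //; apply/eqP.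
Qed.

Lemma monic_irredp_dvdp_Xcard_subX : u %| 'X^(#|K| ^ (size u).-1) - 'X.
Proof.
pose x : {poly %/ u with uI} := in_qpoly u 'X.
have := expf_card x; rewrite card_qfpoly => xq.
by rewrite -in_qpoly_eq0 rmorphB rmorphXn /= -/x xq subrr.
Qed.

(* If x = X mod u is fixed by y |-> y^N, then so is every polynomial in x, i.e.
   every element of K[X]/(u); counting the roots of X^N - X gives q^(deg u) <= N. *)
Lemma dvdp_Xcard_subX_size n :
  (0 < n)%N -> u %| 'X^(#|K| ^ n) - 'X -> ((size u).-1 <= n)%N.
Proof.
move=> n_gt0; rewrite -in_qpoly_eq0 rmorphB rmorphXn subr_eq0 /= => /eqP xN.
set N := (#|K| ^ n)%N in xN.
pose x : {poly %/ u with uI} := in_qpoly u 'X.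
have pcharN : [pchar {poly %/ u with uI}].-nat N.
  by rewrite (eq_pnat _ (pchar_qpoly u)) pnat_pchar_cardX.
have fixN (y : {poly %/ u with uI}) : y ^+ N = y.
  have Ey : y = (map_poly (qpolyC u) (y : {poly K})).[x].
    rewrite -in_qpoly_comp_horner comp_polyXr; apply: val_inj.
    by rewrite /= [RHS]in_qpoly_small // size_mk_monic.
  rewrite [in LHS]Ey horner_exp_pchar //; last first.
    by move=> i; rewrite coef_map -rmorphXn /= expf_cardX.
  by rewrite [x ^+ N]xN -Ey.
have K_gt1 := finNzRing_gt1 K.
have N_gt1 : (1 < N)%N by rewrite -[1%N](expn0 #|K|) ltn_exp2l.
have XNX_neq0 : 'X^N - 'X != 0 :> {poly {poly %/ u with uI}}.
  by rewrite -size_poly_eq0 size_polyDl ?size_polyXn ?size_polyN ?size_polyX.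
have := max_poly_roots XNX_neq0 _ (enum_uniq {poly %/ u with uI}).
rewrite -cardE card_qfpoly size_polyDl ?size_polyXn ?size_polyN ?size_polyX //.
rewrite ltnS leq_exp2l //; apply.
by apply/allP => y _; rewrite rootE !hornerE fixN subrr.
Qed.

End MonicIrreducibleOverFiniteField.

Lemma irredpZ (F : fieldType) (c : F) (u : {poly F}) :
  c != 0 -> irreducible_poly u -> irreducible_poly (c *: u).
Proof.
move=> c_neq0 [u_gt1 uI]; split=> [|d sd]; first by rewrite size_scale.
rewrite dvdpZr // => /(uI _ sd) du.
by rewrite (eqp_trans du) // eqp_sym eqp_scale.
Qed.

Lemma irredp_dvdp_Xcard_subX (K : finFieldType) (u : {poly K}) :
  irreducible_poly u -> u %| 'X^(#|K| ^ (size u).-1) - 'X.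
Proof.
move=> uI; have u_neq0 := irredp_neq0 uI.
have c_neq0 : (lead_coef u)^-1 != 0 by rewrite invr_eq0 lead_coef_eq0.
have mI : monic_irreducible_poly ((lead_coef u)^-1 *: u).
  split; first exact: irredpZ.
  by rewrite monicE lead_coefZ mulVf // lead_coef_eq0.
have := monic_irredp_dvdp_Xcard_subX mI.
by rewrite size_scale // (eqp_dvdl _ (eqp_scale _ c_neq0)).
Qed.

Lemma dvdp_size_gt1 (F : fieldType) (d h : {poly F}) :
  h != 0 -> size d != 1%N -> d %| h -> (1 < size d)%N.
Proof.
move=> h_neq0 sd dh.
have d_neq0 : d != 0 by apply: contraTneq dh => ->; rewrite dvd0p.
by move: sd; rewrite -size_poly_gt0 in d_neq0; case: (size d) d_neq0 => [|[]].
Qed.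

Lemma exists_irredp_dvdp (K : finFieldType) (u : {poly K}) :
  (1 < size u)%N -> exists2 w, irreducible_poly w & w %| u.
Proof.
elim: {u}(size u) {-2}u (leqnn (size u)) => [|n IH] u su u_gt1.
  by rewrite ltnNge (leq_trans su) in u_gt1.
have [/irreducibleP uI|] := boolP (irreducibleb u); first by exists u.
rewrite /irreducibleb [X in X && _]u_gt1 negb_forall => /existsP [q].
rewrite negb_imply -ltnNge -Pdiv.Idomain.dvdpE => /andP [qu q_gt1].
have [|w wI wq] := IH q _ q_gt1; last by exists w => //; apply: dvdp_trans wq qu.
rewrite -ltnS (leq_ltn_trans (size_npoly q)) // (leq_trans _ su) //.
by rewrite prednK // ltnW.
Qed.

Lemma irredp_of_dvdp_size (K : finFieldType) (h : {poly K}) :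
  (1 < size h)%N ->
  (forall w, irreducible_poly w -> w %| h -> (size h <= size w)%N) ->
  irreducible_poly h.
Proof.
move=> h_gt1 large; split=> // d sd dh.
have h_neq0 : h != 0 by rewrite -size_poly_gt0 ltnW.
have d_gt1 := dvdp_size_gt1 h_neq0 sd dh.
have [w wI wd] := exists_irredp_dvdp d_gt1.
rewrite -dvdp_size_eqp // eqn_leq dvdp_leq //=.
apply: leq_trans (large w wI (dvdp_trans wd dh)) (dvdp_leq _ wd).
by rewrite -size_poly_gt0 ltnW.
Qed.

Section ExtensionOfDegree.

Variables (F L : finFieldType) (iota : {rmorphism F -> L}) (s : nat).
Hypotheses (s_gt0 : (0 < s)%N) (cardL : #|L| = (#|F| ^ s)%N).

Lemma monic_irredp_map_splits (g : {poly F}) :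
  monic_irreducible_poly g -> size g = s.+1 ->
  exists rs : seq L, map_poly iota g = \prod_(x <- rs) ('X - x%:P).
Proof.
move=> [gI gM] sg; have := irredp_dvdp_Xcard_subX gI.
rewrite sg -cardL -(dvdp_map iota) rmorphB /= map_polyXn map_polyX.
rewrite finField_genPoly => /dvdp_prod_XsubC [m Em].
exists (mask m (index_enum L)); apply/eqP.
by rewrite -eqp_monic ?map_monic ?monic_prod_XsubC.
Qed.

Lemma irredp_map_dvdp_size (f : {poly F}) (w : {poly L}) :
  monic_irreducible_poly f -> irreducible_poly w -> w %| map_poly iota f ->
  ((size f).-1 <= s * (size w).-1)%N.
Proof.
move=> fMI wI wf; have [fI _] := fMI.
pose P : {poly F} := 'X^(#|F| ^ (s * (size w).-1)) - 'X.
have wP : w %| map_poly iota P.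
  have := irredp_dvdp_Xcard_subX wI; rewrite cardL -expnM.
  by rewrite rmorphB /= map_polyXn map_polyX.
have gcd_nconst : size (gcdp f P) != 1%N.
  have w_gcd : w %| map_poly iota (gcdp f P) by rewrite gcdp_map dvdp_gcd wf wP.
  have gcd_neq0 : gcdp f P != 0 by rewrite gcdp_eq0 negb_and irredp_neq0.
  rewrite neq_ltn -(size_map_poly iota) (leq_trans wI.1 (dvdp_leq _ w_gcd)) ?orbT //.
  by rewrite map_poly_eq0.
have fP : f %| P by rewrite -(eqp_dvdl _ (fI _ gcd_nconst (dvdp_gcdl f P))) dvdp_gcdr.
apply: (@dvdp_Xcard_subX_size _ _ fMI _ _ fP).
by rewrite muln_gt0 s_gt0 -subn1 subn_gt0 wI.1.
Qed.

Lemma irredp_map_factor (f : {poly F}) (H : {poly L}) p :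
  (0 < p)%N -> monic_irreducible_poly f -> size f = (p * s).+1 ->
  size H = p.+1 -> H %| map_poly iota f -> irreducible_poly H.
Proof.
move=> p_gt0 fMI sf sH Hf; apply: irredp_of_dvdp_size => [|w wI wH].
  by rewrite sH ltnS.
have := irredp_map_dvdp_size fMI wI (dvdp_trans wH Hf).
rewrite sf mulnC leq_pmul2l // sH => p_le.
by rewrite -(prednK (ltnW wI.1)) ltnS.
Qed.

End ExtensionOfDegree.

Lemma size_comp_poly_gt1 (R : idomainType) (g L : {poly R}) :
  (1 < size L)%N -> (1 < size (g \Po L))%N = (1 < size g)%N.
Proof.
have gt1E n : (1 < n)%N = (0 < n.-1)%N by case: n => [|[]].
by move=> L_gt1; rewrite !gt1E size_comp_poly muln_gt0 -!gt1E L_gt1 andbT.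
Qed.

Lemma size_comp_poly_eq (R : idomainType) (g L : {poly R}) p s :
  g != 0 -> (0 < p)%N -> size L = p.+1 -> size (g \Po L) = (p * s).+1 ->
  size g = s.+1.
Proof.
move=> g_neq0 p_gt0 sL sgL; have := size_comp_poly g L.
rewrite sgL sL /= mulnC => /eqP; rewrite eqn_pmul2r // => /eqP ->.
by rewrite prednK // size_poly_gt0.
Qed.

Lemma monic_irredp_comp (F : fieldType) (g L : {poly F}) :
  L \is monic -> (1 < size L)%N ->
  monic_irreducible_poly (g \Po L) -> monic_irreducible_poly g.
Proof.
move=> LM L_gt1 [[gL_gt1 gLI] gLM]; split; last first.
  by rewrite monicE -(eqP gLM) lead_coef_comp // (eqP LM) expr1n mulr1.
split=> [|d sd dg]; first by rewrite -(size_comp_poly_gt1 g L_gt1).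
have g_neq0 : g != 0 by rewrite -size_poly_gt0 ltnW // -(size_comp_poly_gt1 g L_gt1).
have d_gt1 := dvdp_size_gt1 g_neq0 sd dg.
have dgL : d \Po L %= g \Po L.
  apply: gLI; last exact: dvdp_comp_poly.
  by rewrite neq_ltn size_comp_poly_gt1 // d_gt1 orbT.
have := congr1 predn (eqp_size dgL); rewrite !size_comp_poly => /eqP.
rewrite eqn_pmul2r -?subn1 ?subn_gt0 // !subn1 => /eqP dg_size.
by rewrite -dvdp_size_eqp // -(prednK (ltnW d_gt1)) dg_size prednK ?size_poly_gt0.
Qed.

Lemma Gfixed_size_leq_const (F : idomainType) (S : seq F) (r : {poly F}) :
  uniq S -> Gfixed (fun b => b \in S) r -> (size r <= size S)%N -> r = r.[0]%:P.
Proof.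
move=> S_uniq rS sr; apply/eqP; rewrite -subr_eq0; apply/eqP.
apply: (roots_geq_poly_eq0 _ S_uniq).
  apply/allP => b bS; have rb : r.[0] = r.[b].
    by rewrite -{1}(rS b bS) horner_comp !hornerE.
  by rewrite rootE !hornerE rb subrr.
apply: leq_trans sr; have [->|r_neq0] := eqVneq r 0; first by rewrite horner0 subrr.
rewrite (leq_trans (size_polyD _ _)) // size_polyN geq_max leqnn.
by rewrite (leq_trans (size_polyC_leq1 _)) // size_poly_gt0.
Qed.

Section TranslationInvariantPolynomials.

Variables (F : fieldType) (S : seq F) (L : {poly F}).
Hypotheses (S_uniq : uniq S) (S_gt0 : (0 < size S)%N).
Hypotheses (sizeL : size L = (size S).+1) (L_fixed : Gfixed (fun b => b \in S) L).

Lemma Gfixed_divp_modp h : Gfixed (fun b => b \in S) h ->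
  Gfixed (fun b => b \in S) (h %/ L) /\ Gfixed (fun b => b \in S) (h %% L).
Proof.
move=> hS; suff fixed b : b \in S ->
    (h %/ L) \Po ('X + b%:P) = h %/ L /\ (h %% L) \Po ('X + b%:P) = h %% L.
  by split=> b /fixed [].
move=> bS; set T := 'X + b%:P.
have small : (size ((h %% L) \Po T) < size L)%N.
  by rewrite size_comp_poly2 ?size_XaddC // ltn_modp -size_poly_gt0 sizeL.
have Eh : h = ((h %/ L) \Po T) * L + ((h %% L) \Po T).
  by rewrite -{1}(hS b bS) {1}(divp_eq h L) comp_polyD comp_polyM (L_fixed bS).
split; first by rewrite [in RHS]Eh divp_addl_mul_small.
by rewrite [in RHS]Eh modp_addl_mul_small.
Qed.

Lemma Gfixed_comp h : Gfixed (fun b => b \in S) h -> exists g, h = g \Po L.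
Proof.
have L_neq0 : L != 0 by rewrite -size_poly_gt0 sizeL.
elim: {h}(size h) {-2}h (leqnn (size h)) => [|n IH] h sh hS.
  by exists 0; move: sh; rewrite leqn0 size_poly_eq0 comp_poly0 => /eqP.
have [qS rS] := Gfixed_divp_modp hS.
have r_const : h %% L = (h %% L).[0]%:P.
  by apply: (Gfixed_size_leq_const S_uniq rS); rewrite -ltnS -sizeL ltn_modp.
have [|g Eg] := IH (h %/ L) _ qS.
  by rewrite size_divp // sizeL leq_subLR (leq_trans sh) // -add1n leq_add2r.
exists (g * 'X + (h %% L).[0]%:P).
by rewrite comp_poly_MXaddC -Eg -r_const -divp_eq.
Qed.

End TranslationInvariantPolynomials.

Definition almost_AS_poly (R : nzRingType) p (be ga : R) : {poly R} :=
  'X^p - be *: 'X - ga%:P.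

Lemma almost_AS_polyE (R : nzRingType) p (be ga : R) :
  almost_AS_poly p be ga = almost_AS_poly p be 0 - ga%:P.
Proof. by rewrite /almost_AS_poly polyC0 subr0. Qed.

Lemma size_almost_AS_poly_tail (R : nzRingType) p (be ga : R) :
  (1 < p)%N -> (size (- (be *: 'X) - ga%:P)%R < p.+1)%N.
Proof.
move=> p_gt1; rewrite (leq_ltn_trans (size_polyD _ _)) // gtn_max !size_polyN size_polyC.
rewrite (leq_ltn_trans (size_scale_leq _ _)) ?size_polyX ?ltnS //=.
by rewrite (leq_trans (leq_b1 _)) // ltnW.
Qed.

Lemma size_almost_AS_poly (R : nzRingType) p (be ga : R) :
  (1 < p)%N -> size (almost_AS_poly p be ga) = p.+1.
Proof.
move=> p_gt1; rewrite /almost_AS_poly -addrA size_polyDl ?size_polyXn //.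
exact: size_almost_AS_poly_tail.
Qed.

Lemma almost_AS_poly_monic (R : nzRingType) p (be ga : R) :
  (1 < p)%N -> almost_AS_poly p be ga \is monic.
Proof.
move=> p_gt1; rewrite monicE /almost_AS_poly -addrA lead_coefDl ?lead_coefXn //.
by rewrite size_polyXn size_almost_AS_poly_tail.
Qed.

Lemma map_almost_AS_poly (R S : nzRingType) (f : {rmorphism R -> S}) p (be ga : R) :
  map_poly f (almost_AS_poly p be ga) = almost_AS_poly p (f be) (f ga).
Proof. by rewrite !rmorphB /= map_polyXn map_polyZ map_polyX map_polyC. Qed.

Lemma Gfixed_almost_AS_poly (R : comNzRingType) p (be ga : R) :
  p \in [pchar R] -> Gfixed (fun b => b ^+ p == be * b) (almost_AS_poly p be ga).
Proof.
move=> pcharRp b /eqP bp; have pcharXp : p \in [pchar {poly R}] by rewrite pchar_poly.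
have pnatp : [pchar {poly R}].-nat p.
  by rewrite (eq_pnat _ (pcharf_eq pcharXp)) pnat_id ?(pcharf_prime pcharRp).
rewrite /almost_AS_poly !comp_polyB comp_polyC comp_polyZ comp_polyX comp_Xn_poly.
by rewrite exprDn_pchar // -polyC_exp bp -!mul_polyC polyCM; ring.
Qed.

Lemma natr_inj_pchar (R : nzRingType) p i j : p \in [pchar R] ->
  (i < p)%N -> (j < p)%N -> i%:R = j%:R :> R -> i = j.
Proof.
move=> pcharRp; wlog le_ij : i j / (i <= j)%N.
  by move=> W ip jp Eij; case: (leqP i j) => [|/ltnW] ij; [exact: W | apply/esym/W].
move=> _ jp /eqP; rewrite eq_sym -subr_eq0 -natrB // -(dvdn_pcharf pcharRp).
have [ji0|ji_gt0] := posnP (j - i).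
  by move=> _; apply/eqP; rewrite eqn_leq le_ij -subn_eq0 ji0.
by rewrite gtnNdvd // (leq_ltn_trans (leq_subr _ _) jp).
Qed.

Lemma add_subgroup_mulrn (V : zmodType) (G : {pred V}) a k :
  add_subgroup G -> a \in G -> a *+ k \in G.
Proof.
move=> [G0 GB] aG.
have GN c : c \in G -> - c \in G by move=> cG; rewrite -sub0r GB.
have GD c d : c \in G -> d \in G -> c + d \in G.
  by move=> cG dG; rewrite -[d]opprK GB ?GN.
by elim: k => [|k IH]; rewrite ?mulr0n // mulrSr GD.
Qed.

Lemma add_subgroup_pchar_eq (F : finFieldType) p (G : {set F}) a :
  p \in [pchar F] -> add_subgroup (G : {pred F}) -> #|G| = p -> a \in G -> a != 0 ->
  G = [set a *+ k | k : 'I_p].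
Proof.
move=> pcharFp GS cardG aG a_neq0; apply/esym/eqP; rewrite eqEcard.
apply/andP; split; first by apply/subsetP => _ /imsetP [k _ ->]; apply: add_subgroup_mulrn.
rewrite cardG card_imset ?card_ord // => i j.
rewrite -[a *+ i]mulr_natr -[a *+ j]mulr_natr => /(mulfI a_neq0).
by move/(natr_inj_pchar pcharFp (ltn_ord i) (ltn_ord j)); apply: val_inj.
Qed.

Lemma add_subgroup_pchar_exp (F : finFieldType) p (G : {set F}) :
  p \in [pchar F] -> add_subgroup (G : {pred F}) -> #|G| = p ->
  exists2 be : F, be != 0 & forall b, b \in G -> b ^+ p = be * b.
Proof.
move=> pcharFp GS cardG; have p_gt1 := prime_gt1 (pcharf_prime pcharFp).
have [a] : exists a, a \in G :\ 0.
  apply/set0Pn; rewrite -card_gt0 -(ltn_add2l (0 \in G)) addn0 -cardsD1 cardG.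
  exact: leq_ltn_trans (leq_b1 _) p_gt1.
rewrite in_setD1 => /andP [a_neq0 aG]; exists (a ^+ p.-1); first exact: expf_neq0.
move=> b; rewrite (add_subgroup_pchar_eq pcharFp GS cardG aG a_neq0).
move=> /imsetP [k _ ->]; rewrite -mulr_natr exprMn.
have := pFrobenius_aut_nat pcharFp k; rewrite pFrobenius_autE => ->.
by rewrite -{1}(prednK (ltnW p_gt1)) exprS; ring.
Qed.

Lemma Gfixed_comp_almost_AS_poly (F : finFieldType) p (G : {set F}) (f : {poly F}) :
  p \in [pchar F] -> add_subgroup (G : {pred F}) -> #|G| = p ->
  Gfixed (fun a => a \in G) f ->
  exists2 be : F, be != 0 &
    (forall b, b \in G -> b ^+ p = be * b) /\ exists g, f = g \Po almost_AS_poly p be 0.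
Proof.
move=> pcharFp GS cardG fG; have p_gt1 := prime_gt1 (pcharf_prime pcharFp).
have [be be_neq0 Gbe] := add_subgroup_pchar_exp pcharFp GS cardG.
exists be => //; split=> //.
have sizeG : size (enum G) = p by rewrite -cardE.
apply: (Gfixed_comp (enum_uniq (mem G))); rewrite ?sizeG ?size_almost_AS_poly //.
- exact: ltnW.
- by move=> b; rewrite mem_enum => /Gbe /eqP; apply: Gfixed_almost_AS_poly.
- by move=> b; rewrite mem_enum; apply: fG.
Qed.

Theorem theorem2p5 (F L : finFieldType) (iota : {rmorphism F -> L})
  (p s : nat) (G : {set F}) (f : {poly F}) :
  p \in [pchar F] ->
  (0 < s)%N ->
  #|L| = (#|F| ^ s)%N ->
  add_subgroup (G : {pred F}) -> #|G| = p ->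
  f \is monic -> irreducible_poly f -> size f = (p * s).+1 ->
  Gfixed (fun a => a \in G) f ->
  exists r : seq (F * L),
    map_poly iota f = \prod_(x <- r) ('X^p - (iota x.1) *: 'X - (x.2)%:P)
    /\ (forall x, x \in r ->
          [/\ x.1 != 0,
              irreducible_poly ('X^p - (iota x.1) *: 'X - (x.2)%:P)
            & Gfixed (fun b => [exists a in G, b == iota a])
                     ('X^p - (iota x.1) *: 'X - (x.2)%:P)]).
Proof.
move=> pcharFp s_gt0 cardL GS cardG fM fI sf fG.
have p_gt1 := prime_gt1 (pcharf_prime pcharFp).
have [be be_neq0 [Gbe [g Ef]]] := Gfixed_comp_almost_AS_poly pcharFp GS cardG fG.
have sizeA := size_almost_AS_poly be 0 p_gt1.
have gMI : monic_irreducible_poly g.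
  apply: (monic_irredp_comp (almost_AS_poly_monic be 0 p_gt1)).
    by rewrite sizeA ltnS ltnW.
  by rewrite -Ef.
have sg : size g = s.+1.
  by apply: (size_comp_poly_eq (irredp_neq0 gMI.1) (ltnW p_gt1) sizeA); rewrite -Ef.
have [rs Eg] := monic_irredp_map_splits iota cardL gMI sg.
have Emapf : map_poly iota f = \prod_(ga <- rs) almost_AS_poly p (iota be) ga.
  rewrite Ef map_comp_poly Eg rmorph_prod; apply: eq_bigr => ga _ /=.
  by rewrite comp_polyB comp_polyX comp_polyC map_almost_AS_poly rmorph0 -almost_AS_polyE.
exists [seq (be, ga) | ga <- rs]; split; first by rewrite big_map.
move=> _ /mapP [ga ga_rs ->]; split=> //.
  apply: (irredp_map_factor (iota := iota) s_gt0 cardL (ltnW p_gt1) (fI, fM) sf).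
    exact: size_almost_AS_poly.
  by rewrite Emapf (big_rem _ ga_rs) dvdp_mulIl.
move=> _ /exists_inP [a aG /eqP ->].
have iota_a : iota a ^+ p == iota be * iota a by rewrite -rmorphXn Gbe // rmorphM.
exact: (Gfixed_almost_AS_poly ga (rmorph_pchar iota pcharFp) iota_a).
Qed.
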